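(* Let $x\in\mathbb{R}_+^n$ and let $\mathrm{IC}(\mathbf{a}_0,\dots,\mathbf{a}_{n-1})$ be an interval circulant matrix. Then $x\in\mathrm{Attr}(A)$ for all $A\in\mathrm{IC}(\mathbf{a}_0,\dots,\mathbf{a}_{n-1})$ if and only if $x\in\mathrm{Attr}(A^{(k)})$ for each $k\in\{0,\dots,n-1\}$.
   Context: Max algebra on $\mathbb{R}_+$: $\oplus=\max$, ordinary product; $\lambda(A)$ greatest max-algebraic eigenvalue (maximum cycle geometric mean); $\mathrm{Attr}(A)=\{x\in\mathbb{R}_+^n: A^{t+1}\otimes x=\lambda(A)A^t\otimes x\text{ for some }t\ge0\}$. $\mathrm{Circ}(a_0,\dots,a_{n-1})$ has entries $A_{i,j}=a_t$, $t\equiv j-i\pmod n$; $\mathrm{IC}(\mathbf{a}_0,\dots,\mathbf{a}_{n-1})$ is the set of all $\mathrm{Circ}(a_0,\dots,a_{n-1})$ with $a_t\in\mathbf{a}_t$, each $\mathbf{a}_t\subseteq\mathbb{R}_+$ a nonempty interval of one of the forms $[\underline{a}_t,\overline{a}_t]$, $(\underline{a}_t,\overline{a}_t)$, $(\underline{a}_t,\overline{a}_t]$, $[\underline{a}_t,\overline{a}_t)$. $A^{(k)}=\mathrm{Circ}(\underline{a}_0,\dots,\underline{a}_{k-1},\overline{a}_k,\underline{a}_{k+1},\dots,\underline{a}_{n-1})$. *)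

From HB Require Import structures.
From mathcomp Require Import all_boot all_order all_algebra.
Set Implicit Arguments. Unset Strict Implicit. Unset Printing Implicit Defensive.
Import Order.TTheory GRing.Theory Num.Theory.
Local Open Scope ring_scope.

Section MaxAlg.
Variable R : rcfType.

Fact rootr_subproof (k : nat) (x : R) :
  exists y : R, (0 <= y) && (if 0 <= x then y ^+ k.+1 == x else y == 0).
Proof.
case x_ge0: (0 <= x); last by exists 0; rewrite lexx eqxx.
have le0x1: 0 <= x + 1 by rewrite addr_ge0.
have [|y /andP[y_ge0 _]] := @poly_ivt R ('X ^+ k.+1 - x%:P) 0 (x + 1) le0x1.
  rewrite !hornerE expr0n /= sub0r oppr_le0 x_ge0 /= subr_ge0.
  have h1 : 1 <= x + 1 by rewrite lerDr.
  have h3 : x + 1 <= (x + 1) ^+ k.+1.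
    have := exprn_ege1 k h1; rewrite exprS => h2.
    by apply: (le_trans _ (ler_wpM2l le0x1 h2)); rewrite mulr1.
  by apply: le_trans h3; rewrite lerDl.
rewrite rootE !hornerE subr_eq0 => hy; exists y; by rewrite y_ge0.
Qed.

(* rootr k x = the nonnegative (k+1)-th root of x (0 if x < 0) *)
Definition rootr (k : nat) (x : R) : R := xchoose (rootr_subproof k x).

Definition mmul n (A B : 'M[R]_n) : 'M[R]_n :=
  \matrix_(i, j) \big[Num.max/0]_(l < n) (A i l * B l j).
Definition mmulv n (A : 'M[R]_n) (x : 'cV[R]_n) : 'cV[R]_n :=
  \col_i \big[Num.max/0]_(j < n) (A i j * x j 0).
Definition mpow n (A : 'M[R]_n) (t : nat) : 'M[R]_n := iter t (mmul A) 1%:M.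

(* lambda(A): maximum cycle geometric mean, cycles = sequences of pairwise
   distinct indices i_0,...,i_k (length k+1 <= n), closed cyclically. *)
Definition lambda n (A : 'M[R]_n) : R :=
  \big[Num.max/0]_(k < n)
    \big[Num.max/0]_(s : (k.+1).-tuple 'I_n | uniq s)
      rootr k (\prod_(i < k.+1) A (tnth s i) (tnth s (ordS i))).

Definition Attr n (A : 'M[R]_n) (x : 'cV[R]_n) : Prop :=
  (forall i, 0 <= x i 0) /\
  exists t : nat, mmulv (mpow A t.+1) x = lambda A *: mmulv (mpow A t) x.

Definition Circ n (a : nat -> R) : 'M[R]_n :=
  \matrix_(i < n, j < n) a ((j + n - i) %% n)%N.

Definition in_intv (lo hi : R) (lc rc : bool) (a : R) : bool :=
  (if lc then lo <= a else lo < a) && (if rc then a <= hi else a < hi).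

Definition Ak n (lo hi : nat -> R) (k : nat) : 'M[R]_n :=
  Circ n (fun t => if t == k then hi t else lo t).

End MaxAlg.

(* In the max-times semiring a circulant matrix is [A = (+)_t a_t P^t], where
   [P] is the cyclic shift: the summands commute and [P^n = 1].  If [a_k] is a
   largest coefficient, then [lambda(A) = a_k] and a pigeonhole argument on the
   expansion of [A^N] gives [A^(N+1) = a_k P^k A^N] for [N >= N0 = n(n-1)+1].
   Hence [x] is in Attr(A) iff [A^(N0+1) x = a_k A^N0 x], for this fixed [N0].
   If [x] is in Attr(A^(k)) with [k] maximising [a], then [(a_k / hi_k) A^(k)]
   lies below [A] and has the same dominant term, and attraction passes from it
   to [A].  Conversely, [A^(k)] is the limit as [e -> 0] of the matrices
   [(1 - e) A^(k) + e B] with [B] in the interval family, which belong to the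
   family themselves, and the fixed-exponent condition is closed. *)

From HB Require Import structures.
From mathcomp Require Import all_boot all_order all_algebra.
From mathcomp Require Import zify ring lra.
Set Implicit Arguments. Unset Strict Implicit. Unset Printing Implicit Defensive.
Import Order.TTheory GRing.Theory Num.Theory.
Local Open Scope ring_scope.

Section MaxTimes.
Variable R : realDomainType.

Record maxtimes := MaxTimes { mtval :> R; mtval_ge0 : 0 <= mtval }.
HB.instance Definition _ := [isSub for mtval].
HB.instance Definition _ := [Choice of maxtimes by <:].

Definition mt0 := MaxTimes (lexx 0).
Definition mt1 := MaxTimes ler01.

Fact mtadd_ge0 (x y : maxtimes) : 0 <= Num.max (mtval x) (mtval y).
Proof. by rewrite le_max mtval_ge0. Qed.
Definition mtadd (x y : maxtimes) := MaxTimes (mtadd_ge0 x y).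

Fact mtmul_ge0 (x y : maxtimes) : 0 <= mtval x * mtval y.
Proof. by rewrite mulr_ge0 ?mtval_ge0. Qed.
Definition mtmul (x y : maxtimes) := MaxTimes (mtmul_ge0 x y).

Fact mtaddA : associative mtadd.
Proof. by move=> x y z; apply: val_inj; rewrite /= maxA. Qed.
Fact mtaddC : commutative mtadd.
Proof. by move=> x y; apply: val_inj; rewrite /= maxC. Qed.
Fact mtadd0 : left_id mt0 mtadd.
Proof. by move=> x; apply: val_inj; rewrite /= max_r ?mtval_ge0. Qed.
HB.instance Definition _ := GRing.isNmodule.Build maxtimes mtaddA mtaddC mtadd0.

Fact mtmulA : associative mtmul.
Proof. by move=> x y z; apply: val_inj; rewrite /= mulrA. Qed.
Fact mtmulC : commutative mtmul.
Proof. by move=> x y; apply: val_inj; rewrite /= mulrC. Qed.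
Fact mtmul1 : left_id mt1 mtmul.
Proof. by move=> x; apply: val_inj; rewrite /= mul1r. Qed.
Fact mtmulDl : left_distributive mtmul mtadd.
Proof. by move=> x y z; apply: val_inj; rewrite /= maxr_pMl ?mtval_ge0. Qed.
Fact mtmul0 : left_zero mt0 mtmul.
Proof. by move=> x; apply: val_inj; rewrite /= mul0r. Qed.
Fact mt1_neq0 : mt1 != mt0.
Proof. by apply/eqP => /(congr1 val) /= /eqP; rewrite oner_eq0. Qed.
HB.instance Definition _ := GRing.Nmodule_isComNzSemiRing.Build maxtimes
  mtmulA mtmulC mtmul1 mtmulDl mtmul0 mt1_neq0.

Lemma mtvalD (x y : maxtimes) : mtval (x + y) = Num.max (mtval x) (mtval y).
Proof. by []. Qed.
Lemma mtvalM (x y : maxtimes) : mtval (x * y) = mtval x * mtval y.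
Proof. by []. Qed.
Lemma mtval0 : mtval 0 = 0. Proof. by []. Qed.
Lemma mtvalX (x : maxtimes) m : mtval (x ^+ m) = mtval x ^+ m.
Proof. by elim: m => [|m IH] //; rewrite !exprS mtvalM IH. Qed.

Lemma mt_addid (x : maxtimes) : x + x = x.
Proof. by apply: val_inj; rewrite /= maxxx. Qed.

Lemma mt_addr_eq (x y : maxtimes) : x + y = y <-> mtval x <= mtval y.
Proof.
split=> [<-|le_xy]; first by rewrite mtvalD le_max lexx.
by apply: val_inj; rewrite /= max_r.
Qed.

Definition mt_of (r : R) : maxtimes := insubd (0 : maxtimes) r.

Lemma mt_ofK r : 0 <= r -> mtval (mt_of r) = r.
Proof. by move=> r_ge0; rewrite /mt_of -[mtval _]/(val _) val_insubd r_ge0. Qed.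

End MaxTimes.

Lemma mx_addid (S : nmodType) m1 m2 : (forall x : S, x + x = x) ->
  forall A : 'M[S]_(m1, m2), A + A = A.
Proof. by move=> addid A; apply/matrixP => i j; rewrite mxE addid. Qed.

Section IdempotentOrder.
Variable T : pzSemiRingType.
Hypothesis addid : forall x : T, x + x = x.

Definition lee (x y : T) := x + y = y.

Lemma lee_refl x : lee x x. Proof. exact: addid. Qed.

Lemma lee_trans y x z : lee x y -> lee y z -> lee x z.
Proof. by rewrite /lee => hxy hyz; rewrite -hyz addrA hxy. Qed.

Lemma lee_addl x y : lee x (x + y). Proof. by rewrite /lee addrA addid. Qed.
Lemma lee_addr x y : lee y (x + y). Proof. by rewrite /lee addrCA addid. Qed.

Lemma lee_add_lub x y z : lee x z -> lee y z -> lee (x + y) z.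
Proof. by rewrite /lee => hx hy; rewrite -addrA hy hx. Qed.

Lemma lee_add x y x' y' : lee x x' -> lee y y' -> lee (x + y) (x' + y').
Proof.
move=> hx hy; apply: lee_add_lub.
  exact: lee_trans hx (lee_addl _ _).
exact: lee_trans hy (lee_addr _ _).
Qed.

Lemma lee_mull z x y : lee x y -> lee (z * x) (z * y).
Proof. by rewrite /lee => h; rewrite -mulrDr h. Qed.
Lemma lee_mulr z x y : lee x y -> lee (x * z) (y * z).
Proof. by rewrite /lee => h; rewrite -mulrDl h. Qed.

Lemma lee_mul x y x' y' : lee x x' -> lee y y' -> lee (x * y) (x' * y').
Proof. by move=> hx hy; apply: lee_trans (lee_mulr _ hx) (lee_mull _ hy). Qed.

Lemma lee_anti x y : lee x y -> lee y x -> x = y.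
Proof. by rewrite /lee => hxy hyx; rewrite -hxy addrC hyx. Qed.

Lemma lee_expn x y m : lee x y -> lee (x ^+ m) (y ^+ m).
Proof.
move=> h; elim: m => [|m IH]; first by rewrite !expr0; apply: lee_refl.
by rewrite !exprS; apply: lee_mul.
Qed.

Lemma lee_sum (I : eqType) (s : seq I) (F : I -> T) i :
  i \in s -> lee (F i) (\sum_(j <- s) F j).
Proof.
elim: s => [|y s IH] //; rewrite inE big_cons => /orP[/eqP->|/IH h].
  exact: lee_addl.
exact: lee_trans h (lee_addr _ _).
Qed.

Lemma lee_sum2 (I : Type) (s : seq I) (F G : I -> T) :
  (forall i, lee (F i) (G i)) -> lee (\sum_(j <- s) F j) (\sum_(j <- s) G j).
Proof.
move=> h; elim: s => [|y s IH]; first by rewrite !big_nil; apply: lee_refl.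
by rewrite !big_cons; apply: lee_add.
Qed.

Lemma lee_expr_add_split (X Y : T) : GRing.comm X Y -> forall p q,
  lee ((X + Y) ^+ (p + q).+1)
      (X ^+ p.+1 * (X + Y) ^+ q + Y ^+ q.+1 * (X + Y) ^+ p).
Proof.
move=> cXY p q.
suff: forall m p q, (p + q)%N = m ->
  lee ((X + Y) ^+ m.+1) (X ^+ p.+1 * (X + Y) ^+ q + Y ^+ q.+1 * (X + Y) ^+ p).
  by apply.
elim=> [|m IH] {}p {}q.
  by case: p q => [|?] [|?] // _; rewrite !expr1 !expr0 !mulr1; apply: lee_refl.
move=> hpq; rewrite exprS mulrDl; apply: lee_add_lub.
- case: p hpq => [|p] hpq.
    by rewrite add0n in hpq; rewrite -hpq expr1; apply: lee_addl.
  have /(lee_mull X) := IH p q (succn_inj hpq).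
  rewrite mulrDr mulrA -exprS => h; apply: lee_trans h _; apply: lee_add.
    exact: lee_refl.
  rewrite mulrA (commrX q.+1 cXY) -mulrA; apply: lee_mull.
  by rewrite [_ ^+ p.+1]exprS; apply: lee_mulr; apply: lee_addl.
- case: q hpq => [|q] hpq.
    by rewrite addn0 in hpq; rewrite -hpq expr1; apply: lee_addr.
  have /(lee_mull Y) := IH p q (succn_inj (etrans (esym (addnS p q)) hpq)).
  rewrite mulrDr [Y * (Y ^+ _ * _)]mulrA -exprS => h; apply: lee_trans h _.
  apply: lee_add; last exact: lee_refl.
  have cYX : GRing.comm Y (X ^+ p.+1) by apply: commrX; apply/esym.
  rewrite mulrA cYX -mulrA; apply: lee_mull.
  by rewrite [_ ^+ q.+1]exprS; apply: lee_mulr; apply: lee_addr.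
Qed.

(* Pigeonhole: every monomial of degree [size s * q + 1] in the summands of
   [s] contains one of them at least [q + 1] times. *)
Lemma lee_sum_expr_pigeonhole (s : seq T) q z : s != [::] ->
  (forall x y, x \in s -> y \in s -> GRing.comm x y) ->
  (forall x, x \in s -> lee (x ^+ q.+1) z) ->
  lee ((\sum_(x <- s) x) ^+ (size s * q).+1)
      (z * (\sum_(x <- s) x) ^+ (size s * q - q)).
Proof.
elim: s => [|y s IH] // _ hcomm hz.
have hz_y : lee (y ^+ q.+1) z by apply: hz; rewrite mem_head.
case: s IH hcomm hz => [|y' s] IH hcomm hz.
  by rewrite big_seq1 /= mul1n subnn expr0 mulr1.
set s' := y' :: s in IH hcomm hz *.
have sub x : x \in s' -> x \in y :: s' by move=> hx; rewrite inE hx orbT.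
have IH' := IH isT (fun x y hx hy => hcomm x y (sub _ hx) (sub _ hy))
  (fun x hx => hz x (sub _ hx)).
set X := \sum_(x <- s') x in IH' *.
have cXy : GRing.comm X y.
  rewrite /X big_seq; apply/esym/commr_sum => x hx.
  by apply: hcomm; rewrite ?mem_head ?sub.
set p := (size s' * q)%N in IH' *.
have le_qp : (q <= p)%N by rewrite /p leq_pmull.
rewrite big_cons addrC.
have -> : (size (y :: s') * q)%N = (p + q)%N by rewrite /= mulSn addnC.
rewrite addnK; apply: lee_trans (lee_expr_add_split cXy p q) _.
rewrite -[X in lee _ X]addid; apply: lee_add; last exact: lee_mulr.
apply: lee_trans (lee_mulr _ IH') _; rewrite -mulrA; apply: lee_mull.
rewrite -[in X in lee _ X](subnK le_qp) exprD; apply: lee_mulr.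
exact/lee_expn/lee_addl.
Qed.

End IdempotentOrder.

Lemma ord_mulrn_card n (t : 'I_n.+1) : t *+ n.+1 = 0.
Proof. by rewrite Zp_mulrn; apply: val_inj; rewrite /= modnMl. Qed.

Section Circulant.
Variables (S : comNzSemiRingType) (n : nat).
Hypothesis addid : forall x : S, x + x = x.
Local Notation I := 'I_n.+1.
Local Notation M := 'M[S]_n.+1.
Let mxid (A : M) : A + A = A := mx_addid addid A.

Definition shift_mx (t : I) : M := \matrix_(i, j) (if j - i == t then 1 else 0).

Lemma shift_mxD t u : shift_mx t * shift_mx u = shift_mx (t + u).
Proof.
apply/matrixP => i j; rewrite !mxE (bigD1 (i + t)) //= big1 => [|l hl].
  rewrite !mxE addrAC subrr add0r eqxx mul1r addr0.
  by rewrite opprD addrA subr_eq [u + t]addrC.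
rewrite !mxE; case: eqP => [hli|_]; last by rewrite mul0r.
by move: hl; rewrite -hli addrC subrK eqxx.
Qed.

Lemma shift_mx0 : shift_mx 0 = 1.
Proof. by apply/matrixP => i j; rewrite !mxE subr_eq0 eq_sym; case: eqP. Qed.

Lemma shift_mxMn t m : shift_mx t ^+ m = shift_mx (t *+ m).
Proof.
elim: m => [|m IH]; first by rewrite mulr0n shift_mx0.
by rewrite exprS IH shift_mxD mulrS.
Qed.

Lemma shift_mx_comm t u : GRing.comm (shift_mx t) (shift_mx u).
Proof. by rewrite /GRing.comm !shift_mxD addrC. Qed.

Definition circ_term (a : I -> S) t : M := a t *: shift_mx t.
Definition circ_mx (a : I -> S) : M := \sum_t circ_term a t.

Lemma circ_mxE a i j : circ_mx a i j = a (j - i).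
Proof.
rewrite summxE (bigD1 (j - i)) //= big1 => [|t ht].
  by rewrite !mxE eqxx mulr1 addr0.
by rewrite !mxE eq_sym (negbTE ht) mulr0.
Qed.

Lemma circ_termM a b t u :
  circ_term a t * circ_term b u = (a t * b u) *: shift_mx (t + u).
Proof. by rewrite /circ_term -scalerAl -scalerAr scalerA shift_mxD. Qed.

Lemma circ_term_comm a b t u : GRing.comm (circ_term a t) (circ_term b u).
Proof. by rewrite /GRing.comm !circ_termM mulrC addrC. Qed.

Lemma circ_term_circ_mx_comm a b t : GRing.comm (circ_term a t) (circ_mx b).
Proof. by apply/commr_sum => u _; apply: circ_term_comm. Qed.

Lemma shift_mx_circ_mx_comm a t : GRing.comm (shift_mx t) (circ_mx a).
Proof.
apply/commr_sum => u _.
by rewrite /GRing.comm /circ_term -scalerAl -scalerAr shift_mx_comm.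
Qed.

Lemma circ_termX a t m : circ_term a t ^+ m = a t ^+ m *: shift_mx (t *+ m).
Proof. by rewrite exprZn shift_mxMn. Qed.

Lemma circ_term_order a t : circ_term a t ^+ n.+1 = (a t ^+ n.+1)%:A.
Proof. by rewrite circ_termX ord_mulrn_card shift_mx0. Qed.

Lemma lee_circ_term a t : lee (circ_term a t) (circ_mx a).
Proof. by apply: (lee_sum mxid); rewrite mem_index_enum. Qed.

Lemma lee_circ_mx a b :
  (forall t, lee (a t) (b t)) -> lee (circ_mx a) (circ_mx b).
Proof.
move=> le_ab; apply: (lee_sum2 mxid) => t.
by rewrite /lee /circ_term -scalerDl le_ab.
Qed.

Definition circ_transient := (n.+1 * n).+1.

Section DominantTerm.
Variables (a : I -> S) (k : I).
Hypothesis a_le_k : forall t, lee (a t) (a k).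

Lemma lee_circ_mx_transient :
  lee (circ_mx a ^+ circ_transient)
      (circ_term a k ^+ n.+1 * circ_mx a ^+ (n.+1 * n - n)).
Proof.
have size_terms : size [seq circ_term a t | t <- index_enum I] = n.+1.
  by rewrite size_map -[index_enum I]enumT size_enum_ord.
have := lee_sum_expr_pigeonhole mxid (s := [seq circ_term a t | t <- index_enum I])
  (q := n) (z := circ_term a k ^+ n.+1).
rewrite size_terms big_map; apply.
- by rewrite -size_eq0 size_terms.
- by move=> _ _ /mapP[t _ ->] /mapP[u _ ->]; apply: circ_term_comm.
- move=> _ /mapP[t _ ->]; rewrite !circ_term_order /lee -scalerDl.
  by rewrite (lee_expn addid _ (a_le_k t)).
Qed.

Lemma circ_mx_exprS N : (circ_transient <= N)%N ->
  circ_mx a ^+ N.+1 = circ_term a k * circ_mx a ^+ N.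
Proof.
move=> le_N0N; apply: lee_anti; last first.
  by rewrite exprS; apply/lee_mulr/lee_circ_term.
have le_nN : (n <= N)%N by apply: leq_trans le_N0N; rewrite ltnW // ltnS leq_pmull.
rewrite -(subnKC (leqW le_N0N)) exprD.
apply: lee_trans (lee_mulr _ lee_circ_mx_transient) _.
have -> : circ_term a k ^+ n.+1 = circ_term a k * circ_term a k ^+ n by rewrite exprS.
rewrite -!mulrA -exprD; apply: lee_mull.
have -> : (n.+1 * n - n + (N.+1 - circ_transient))%N = (N - n)%N.
  by move: le_N0N; rewrite /circ_transient; nia.
rewrite -(subnKC le_nN) exprD addKn; apply/lee_mulr/(lee_expn mxid).
exact: lee_circ_term.
Qed.

Lemma circ_mx_exprD N j : (circ_transient <= N)%N ->
  circ_mx a ^+ (N + j) = circ_term a k ^+ j * circ_mx a ^+ N.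
Proof.
move=> le_N0N; elim: j => [|j IH]; first by rewrite addn0 mul1r.
by rewrite addnS circ_mx_exprS ?(leq_trans le_N0N (leq_addr _ _)) // IH mulrA -exprS.
Qed.

End DominantTerm.
End Circulant.
Arguments shift_mx {S n} t.

Section Attraction.
Variables (R : realFieldType) (n : nat).
Local Notation mt := (maxtimes R).
Local Notation I := 'I_n.+1.
Local Notation M := 'M[mt]_n.+1.
Local Notation V := 'cV[mt]_n.+1.
Local Notation N0 := (circ_transient n).
Let mxid (A : M) : A + A = A := mx_addid (@mt_addid R) A.

Definition attracted (A : M) (lam : mt) (X : V) :=
  exists t, A ^+ t.+1 *m X = lam *: (A ^+ t *m X).

Lemma mulmx_ringM (A B : M) (X : V) : (A * B) *m X = A *m (B *m X).
Proof. by rewrite mulmxA. Qed.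

Lemma mt_mulVf (c : mt) : c != 0 -> mt_of (mtval c)^-1 * c = 1.
Proof.
move=> c_neq0; have c'_neq0 : mtval c != 0.
  by apply: contra c_neq0 => /eqP c0; apply/eqP/val_inj.
by apply: val_inj; rewrite /= mt_ofK ?invr_ge0 ?mtval_ge0 // mulVf.
Qed.

Lemma mt_expf_neq0 (c : mt) m : c != 0 -> c ^+ m != 0.
Proof.
apply: contra => /eqP/(congr1 val)/eqP; rewrite [val _]mtvalX expf_eq0 => /andP[_ /eqP c0].
by apply/eqP/val_inj.
Qed.

Lemma scalemx_mt_inj (c : mt) (Y Z : V) : c != 0 -> c *: Y = c *: Z -> Y = Z.
Proof.
move=> c_neq0 /(congr1 (fun W => mt_of (mtval c)^-1 *: W)).
by rewrite !scalerA mt_mulVf // !scale1r.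
Qed.

Lemma circ_mx_eq0 (a : I -> mt) k :
  (forall t, lee (a t) (a k)) -> a k = 0 -> circ_mx a = 0.
Proof.
move=> a_le_k ak0; rewrite /circ_mx big1 // => t _.
by rewrite /circ_term; have := a_le_k t; rewrite ak0 /lee addr0 => ->; rewrite scale0r.
Qed.

Lemma circ_term_expr_inj (a : I -> mt) k j (Y Z : V) : a k != 0 ->
  circ_term a k ^+ j *m Y = circ_term a k ^+ j *m Z -> Y = Z.
Proof.
rewrite circ_termX -!scalemxAl => ak_neq0 /(scalemx_mt_inj (mt_expf_neq0 j ak_neq0)).
have inv_shift : shift_mx (- (k *+ j)) *m shift_mx (k *+ j) = 1%:M :> M.
  by rewrite mulmxE shift_mxD addNr shift_mx0.
by move/(congr1 (mulmx (shift_mx (- (k *+ j))))); rewrite !mulmxA inv_shift !mul1mx.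
Qed.

Section Dominant.
Variables (a : I -> mt) (k : I).
Hypothesis a_le_k : forall t, lee (a t) (a k).
Local Notation A := (circ_mx a).

Lemma attracted_transient X : attracted A (a k) X ->
  A ^+ N0.+1 *m X = a k *: (A ^+ N0 *m X).
Proof.
move=> [t ht]; have [le_tN0|lt_N0t] := leqP t N0.
  rewrite -(subnK le_tN0) -addnS !exprD !mulmx_ringM ht.
  by rewrite -scalemxAr.
have [ak0|ak_neq0] := eqVneq (a k) 0.
  by rewrite ak0 (circ_mx_eq0 a_le_k ak0) expr0n /= scale0r !mul0mx.
move: ht; rewrite -(subnKC (ltnW lt_N0t)); set j := (t - N0)%N.
rewrite -[(N0 + j).+1]addSn.
rewrite !(circ_mx_exprD (@mt_addid R) a_le_k) // !(mulmx_ringM (circ_term a k ^+ j)).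
rewrite scalemxAr.
exact: circ_term_expr_inj.
Qed.

Lemma attracted_transientP X : attracted A (a k) X <->
  A ^+ N0.+1 *m X = a k *: (A ^+ N0 *m X).
Proof. by split=> [|h]; [apply: attracted_transient | exists N0]. Qed.

End Dominant.

Lemma shift_mx_fixed (b : I -> mt) k X : (forall t, lee (b t) (b k)) ->
  b k != 0 -> attracted (circ_mx b) (b k) X ->
  shift_mx k *m (circ_mx b ^+ N0 *m X) = circ_mx b ^+ N0 *m X.
Proof.
move=> b_le_k bk_neq0 /(attracted_transient b_le_k).
rewrite (circ_mx_exprS (@mt_addid R) b_le_k) // mulmx_ringM /circ_term -scalemxAl.
exact: scalemx_mt_inj.
Qed.

Lemma circ_mx_expr_dominated (a b : I -> mt) k c :
  (forall t, lee (a t) (a k)) -> (forall t, lee (c * b t) (a t)) -> c * b k = a k ->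
  circ_mx a ^+ (N0 + N0) = circ_mx a ^+ N0 * (c *: circ_mx b) ^+ N0.
Proof.
move=> a_le_k cb_le_a cbk.
have -> : c *: circ_mx b = circ_mx (fun t => c * b t).
  by rewrite scaler_sumr; apply: eq_bigr => t _; rewrite /circ_term scalerA.
apply: lee_anti.
- have comm_LA : GRing.comm (circ_term a k ^+ N0) (circ_mx a ^+ N0).
    by apply/commrX/esym/commrX/esym/circ_term_circ_mx_comm.
  rewrite (circ_mx_exprD (@mt_addid R) a_le_k) // comm_LA; apply/lee_mull/(lee_expn mxid).
  by rewrite /circ_term -cbk; apply: (lee_circ_term (@mt_addid R) (fun t => c * b t)).
- by rewrite exprD; apply/lee_mull/(lee_expn mxid)/(lee_circ_mx (@mt_addid R)).
Qed.

(* With [Y = B^N0 X] fixed by [P^k], [A^(2 N0) X = c^N0 A^N0 Y] is also fixed by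
   [P^k], so the dominant term [a k P^k] of [A] acts on it as the scalar [a k]. *)
Lemma attracted_dominated (a b : I -> mt) k c X :
  (forall t, lee (a t) (a k)) -> (forall t, lee (b t) (b k)) ->
  (forall t, lee (c * b t) (a t)) -> c * b k = a k ->
  attracted (circ_mx b) (b k) X -> attracted (circ_mx a) (a k) X.
Proof.
move=> a_le_k b_le_k cb_le_a cbk attr_b.
have [ak0|ak_neq0] := eqVneq (a k) 0.
  by exists 0%N; rewrite ak0 (circ_mx_eq0 a_le_k ak0) expr0n scale0r !mul0mx.
have bk_neq0 : b k != 0 by apply: contra ak_neq0 => /eqP bk0; rewrite -cbk bk0 mulr0.
have fixY := shift_mx_fixed b_le_k bk_neq0 attr_b.
exists (N0 + N0)%N.
rewrite (circ_mx_exprS (@mt_addid R) a_le_k) ?leq_addr // mulmx_ringM.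
rewrite (circ_mx_expr_dominated a_le_k cb_le_a cbk).
have comm_PA : shift_mx k *m circ_mx a ^+ N0 = circ_mx a ^+ N0 *m shift_mx k.
  exact: commrX (shift_mx_circ_mx_comm a k).
rewrite exprZn -scalemxAl !mulmx_ringM; congr (_ *: _).
by rewrite -scalemxAl -!scalemxAr mulmxA comm_PA -mulmxA fixY.
Qed.

End Attraction.

Section Transfer.
Variables (R : rcfType) (n : nat).
Local Notation mt := (maxtimes R).
Local Notation p := n.+1.

Definition mtmx m1 m2 (A : 'M[mt]_(m1, m2)) : 'M[R]_(m1, m2) := map_mx (@mtval R) A.

Definition mtseq (a : nat -> R) (t : 'I_p) : mt := mt_of (a t).

Lemma mtmx_inj m1 m2 : injective (@mtmx m1 m2).
Proof.
move=> A B /matrixP eqAB; apply/matrixP => i j; apply: val_inj.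
by have := eqAB i j; rewrite !mxE.
Qed.

Lemma mtval_sum (J : Type) (r : seq J) (P : pred J) (F : J -> mt) :
  mtval (\sum_(j <- r | P j) F j) = \big[Num.max/0]_(j <- r | P j) mtval (F j).
Proof. exact: (big_morph _ (@mtvalD R) (@mtval0 R)). Qed.

Lemma mmul_mtmx (A B : 'M[mt]_p) : mmul (mtmx A) (mtmx B) = mtmx (A * B).
Proof.
by apply/matrixP => i j; rewrite !mxE mtval_sum; apply: eq_bigr => l _; rewrite !mxE.
Qed.

Lemma mmulv_mtmx (A : 'M[mt]_p) (X : 'cV[mt]_p) : mmulv (mtmx A) (mtmx X) = mtmx (A *m X).
Proof.
apply/matrixP => i j; rewrite !mxE mtval_sum (ord1 j).
by apply: eq_bigr => l _; rewrite !mxE.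
Qed.

Lemma mpow_mtmx (A : 'M[mt]_p) t : mpow (mtmx A) t = mtmx (A ^+ t).
Proof.
elim: t => [|t IH].
  by apply/matrixP => i j; rewrite !mxE; case: (i == j).
by rewrite /mpow iterS -/(mpow _ _) IH mmul_mtmx exprS.
Qed.

Lemma mtmxZ (c : mt) (X : 'cV[mt]_p) : mtmx (c *: X) = mtval c *: mtmx X.
Proof. by apply/matrixP => i j; rewrite !mxE. Qed.

Lemma mtmx_of (x : 'cV[R]_p) : (forall i, 0 <= x i 0) -> mtmx (map_mx (@mt_of R) x) = x.
Proof. by move=> x_ge0; apply/matrixP => i j; rewrite !mxE (ord1 j) mt_ofK. Qed.

Lemma ord_subE (i j : 'I_p) : nat_of_ord (j - i) = ((j + p - i) %% p)%N.
Proof. by rewrite /= modnDmr addnBA // ltnW. Qed.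

Lemma CircE (a : nat -> R) (i j : 'I_p) : Circ p a i j = a (j - i)%R.
Proof. by rewrite mxE ord_subE. Qed.

Lemma Circ_mtmx (a : nat -> R) : (forall t, (t < p)%N -> 0 <= a t) ->
  Circ p a = mtmx (circ_mx (mtseq a)).
Proof.
by move=> a_ge0; apply/matrixP => i j; rewrite CircE !mxE circ_mxE mt_ofK ?a_ge0.
Qed.

End Transfer.

Section Lambda.
Variable R : rcfType.

Lemma rootr_spec k (y : R) : 0 <= y -> 0 <= rootr k y /\ rootr k y ^+ k.+1 = y.
Proof.
move=> y_ge0; have := xchooseP (rootr_subproof k y).
rewrite -/(rootr k y); move: (rootr k y) => r /andP[r_ge0].
by rewrite y_ge0 => /eqP.
Qed.

Lemma lambda_le n (A : 'M[R]_n) c :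
  0 <= c -> (forall i j, 0 <= A i j <= c) -> lambda A <= c.
Proof.
move=> c_ge0 A_bnd; apply: bigmax_le => // m _; apply: bigmax_le => // s _.
set P := \prod_(i < m.+1) _.
have P_ge0 : 0 <= P.
  by apply: prodr_ge0 => i _; case/andP: (A_bnd (tnth s i) (tnth s (ordS i))).
have [r_ge0 rK] := rootr_spec m P_ge0.
rewrite -(ler_pXn2r (ltn0Sn m)) ?nnegrE // rK -[in c ^+ _](card_ord m.+1) -prodr_const.
by apply: ler_prod => i _; apply: A_bnd.
Qed.

Lemma lambda_ge_cycle n (A : 'M[R]_n) m (s : m.+1.-tuple 'I_n) c :
  (m < n)%N -> uniq s -> 0 <= c ->
  (forall i, A (tnth s i) (tnth s (ordS i)) = c) -> c <= lambda A.
Proof.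
move=> lt_mn uniq_s c_ge0 cycle_c.
rewrite /lambda (bigD1 (Ordinal lt_mn)) //= le_max; apply/orP; left.
rewrite (bigD1 s) //= le_max; apply/orP; left.
rewrite (eq_bigr (fun=> c)) // prodr_const card_ord.
have [r_ge0 rK] := rootr_spec m (exprn_ge0 m.+1 c_ge0).
by rewrite (pexpIrn (ltn0Sn m) _ _ rK) ?nnegrE.
Qed.

(* The orbit [0, k, 2k, ...] of the translation by [k] in [Z/nZ] is a
   cycle along which every entry of a circulant matrix equals [a k]. *)
Lemma ord_translation_cycle n (k : 'I_n.+1) :
  exists m (s : m.+1.-tuple 'I_n.+1), [/\ (m < n.+1)%N, uniq s &
    forall i, tnth s (ordS i) = tnth s i + k].
Proof.
have ex_period : exists L, (0 < L)%N && (k *+ L == 0).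
  by exists n.+1; rewrite ord_mulrn_card eqxx.
case: (ex_minnP ex_period) => -[//|m] /andP[_ /eqP period] minL.
have le_mn : (m < n.+1)%N by apply: minL; rewrite ord_mulrn_card eqxx.
exists m, (mktuple (fun i : 'I_m.+1 => k *+ i)); split => //.
  rewrite map_inj_uniq ?enum_uniq // => i j eq_ij.
  apply/val_inj/eqP; apply: contraT => ne_ij.
  wlog lt_ij : i j eq_ij ne_ij / (i < j)%N.
    move=> W; case: (ltngtP i j) => [lt_ij|lt_ji|eq_val]; first exact: (W i j).
    - by apply: (W j i (esym eq_ij)); rewrite // eq_sym.
    - by move: ne_ij; rewrite /= eq_val eqxx.
  have /eqP kji : k *+ (j - i) == 0 by rewrite mulrnBr ?eq_ij ?subrr // ltnW.
  by have := minL (j - i)%N; rewrite subn_gt0 lt_ij kji => /(_ isT); move: (ltn_ord j); lia.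
move=> i; rewrite !tnth_mktuple -mulrSr /=.
by rewrite {2}(divn_eq i.+1 m.+1) mulrnDr mulnC mulrnA period mul0rn add0r.
Qed.

Lemma lambda_Circ n (a : nat -> R) (k : 'I_n.+1) :
  (forall t, (t < n.+1)%N -> 0 <= a t <= a k) -> lambda (Circ n.+1 a) = a k.
Proof.
move=> a_bnd; have /andP[ak_ge0 _] := a_bnd k (ltn_ord k).
apply/le_anti/andP; split.
  by apply: lambda_le => // i j; rewrite CircE; apply: a_bnd.
have [m [s [lt_mn uniq_s cycle_s]]] := ord_translation_cycle k.
by apply: (lambda_ge_cycle lt_mn uniq_s) => // i; rewrite CircE cycle_s addrAC subrr add0r.
Qed.

End Lambda.

Section RealFacts.
Variable R : realFieldType.

Lemma bigmax_dist (J : finType) (u w : J -> R) r : 0 <= r ->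
  (forall j, `|u j - w j| <= r) ->
  `|\big[Num.max/0]_j u j - \big[Num.max/0]_j w j| <= r.
Proof.
move=> r_ge0 uw_r.
have bigmax_le_shift (f g : J -> R) : (forall j, `|f j - g j| <= r) ->
    \big[Num.max/0]_j f j <= \big[Num.max/0]_j g j + r.
  move=> fg_r; apply: bigmax_le => [|j _]; first by rewrite addr_ge0 ?bigmax_ge_id.
  have := le_bigmax 0 g j; have := fg_r j; rewrite ler_norml; lra.
have := bigmax_le_shift _ _ uw_r.
have := bigmax_le_shift w u (fun j => ltac:(by rewrite distrC)).
rewrite ler_norml; lra.
Qed.

Lemma eq0_of_small (F C : R) : 0 <= C ->
  (forall e, 0 < e -> e <= 1 -> `|F| <= e * C) -> F = 0.
Proof.
move=> C_ge0 small; apply/eqP/negPn/negP => F_neq0.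
have F_gt0 : 0 < `|F| by rewrite normr_gt0.
pose e := `|F| / (C + `|F|).
have den_gt0 : 0 < C + `|F| by lra.
have e_gt0 : 0 < e by rewrite divr_gt0.
have e_le1 : e <= 1 by rewrite ler_pdivrMr // mul1r; lra.
have eE : e * C + e * `|F| = `|F| by rewrite -mulrDr divfK // gt_eqF.
have := small e e_gt0 e_le1; have : 0 < e * `|F| by rewrite mulr_gt0.
lra.
Qed.

Lemma ratio_spec (u w : R) : 0 <= u <= w -> 0 <= u / w <= 1 /\ u / w * w = u.
Proof.
case/andP=> u_ge0 u_le_w; have [w0|w_neq0] := eqVneq w 0.
  move: u_le_w; rewrite w0 invr0 !mulr0 lexx ler01 => u_le0.
  by split=> //; apply/le_anti/andP.
have w_gt0 : 0 < w by rewrite lt_def w_neq0 (le_trans u_ge0).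
split; last by rewrite divfK ?gt_eqF.
by rewrite divr_ge0 ?(ltW w_gt0) //= ler_pdivrMr // mul1r.
Qed.

End RealFacts.

Lemma arg_max_ord_bound (R : realDomainType) n (a : nat -> R) :
  (forall t, (t < n.+1)%N -> 0 <= a t) ->
  forall t, (t < n.+1)%N -> 0 <= a t <= a [arg max_(s > ord0 : 'I_n.+1) a s]%O.
Proof.
move=> a_ge0 t lt_tn; rewrite a_ge0 //=.
by case: arg_maxP => // j _ /(_ (Ordinal lt_tn) isT).
Qed.

Section CirculantAttraction.
Variables (R : rcfType) (n : nat) (x : 'cV[R]_n.+1).
Hypothesis x_ge0 : forall i, 0 <= x i 0.
Local Notation p := n.+1.
Local Notation N0 := (circ_transient n).
Local Notation X := (map_mx (@mt_of R) x).

Definition orbit (a : nat -> R) N := mmulv (mpow (Circ p a) N) x.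

Definition orbit_eigen_step (a : nat -> R) N :=
  orbit a N.+1 = \big[Num.max/0]_(t < p) a t *: orbit a N.

Lemma orbit_mtmx (a : nat -> R) N : (forall t, (t < p)%N -> 0 <= a t) ->
  orbit a N = mtmx (circ_mx (mtseq a) ^+ N *m X).
Proof.
by move=> a_ge0; rewrite /orbit (Circ_mtmx a_ge0) -{1}(mtmx_of x_ge0) mpow_mtmx mmulv_mtmx.
Qed.

Lemma lee_mtseq (a : nat -> R) (k : 'I_p) : (forall t, (t < p)%N -> 0 <= a t <= a k) ->
  forall t : 'I_p, lee (mtseq a t) (mtseq a k).
Proof.
move=> a_bnd t; have /andP[at_ge0 at_le] := a_bnd t (ltn_ord t).
by apply/mt_addr_eq; rewrite !mt_ofK // (le_trans at_ge0).
Qed.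

Lemma Attr_Circ_attracted (a : nat -> R) (k : 'I_p) :
  (forall t, (t < p)%N -> 0 <= a t <= a k) ->
  Attr (Circ p a) x <-> attracted (circ_mx (mtseq a)) (mtseq a k) X.
Proof.
move=> a_bnd; have a_ge0 t : (t < p)%N -> 0 <= a t by move/a_bnd/andP=> [].
have orbitZ N : a k *: orbit a N = mtmx (mtseq a k *: (circ_mx (mtseq a) ^+ N *m X)).
  by rewrite mtmxZ mt_ofK ?a_ge0 // orbit_mtmx.
rewrite /Attr (lambda_Circ a_bnd); split=> [[_ [t ht]]|[t ht]].
  by exists t; apply: mtmx_inj; rewrite -orbitZ -orbit_mtmx.
by split=> //; exists t; rewrite -/(orbit a t.+1) orbitZ !orbit_mtmx // ht.
Qed.

Lemma Attr_CircP (a : nat -> R) : (forall t, (t < p)%N -> 0 <= a t) ->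
  Attr (Circ p a) x <-> orbit_eigen_step a N0.
Proof.
move=> a_ge0; pose k : 'I_p := [arg max_(t > ord0) a t]%O.
have a_bnd := arg_max_ord_bound a_ge0.
have maxE : \big[Num.max/0]_(t < p) a t = a k.
  by rewrite (bigmax_eq_arg 0 ord0) // => t _; apply: a_ge0.
rewrite /orbit_eigen_step maxE (Attr_Circ_attracted a_bnd) attracted_transientP.
  rewrite !orbit_mtmx // -[a k](mt_ofK (a_ge0 k (ltn_ord k))) -mtmxZ.
  by split=> [->|/mtmx_inj].
exact: lee_mtseq.
Qed.

Lemma Attr_Circ_dominated (a b : nat -> R) (k : 'I_p) c :
  (forall t, (t < p)%N -> 0 <= a t <= a k) -> (forall t, (t < p)%N -> 0 <= b t <= b k) ->
  0 <= c -> (forall t, (t < p)%N -> c * b t <= a t) -> c * b k = a k ->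
  Attr (Circ p b) x -> Attr (Circ p a) x.
Proof.
move=> a_bnd b_bnd c_ge0 cb_le_a cbk.
have b_ge0 (t : 'I_p) : 0 <= b t by case/andP: (b_bnd t (ltn_ord t)).
rewrite (Attr_Circ_attracted a_bnd) (Attr_Circ_attracted b_bnd).
apply: (attracted_dominated (c := mt_of c)); try exact: lee_mtseq.
  move=> t; have /andP[at_ge0 _] := a_bnd t (ltn_ord t).
  by apply/mt_addr_eq; rewrite mtvalM !mt_ofK ?b_ge0 ?mulr_ge0 ?cb_le_a.
have /andP[ak_ge0 _] := a_bnd k (ltn_ord k).
by apply: val_inj; rewrite /= !mt_ofK ?b_ge0.
Qed.

Lemma mmulv_bound (A : 'M[R]_p) (y : 'cV[R]_p) M Yb :
  (forall i j, 0 <= A i j <= M) -> (forall j, 0 <= y j 0 <= Yb) -> 0 <= M ->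
  forall i, 0 <= mmulv A y i 0 <= M * Yb.
Proof.
move=> A_bnd y_bnd M_ge0 i; rewrite !mxE bigmax_ge_id /=.
apply: bigmax_le => [|j _].
  by have /andP[y0_ge0 y0_le] := y_bnd ord0; rewrite mulr_ge0 // (le_trans y0_ge0).
by case/andP: (A_bnd i j) => ? ?; case/andP: (y_bnd j) => ? ?; apply: ler_pM.
Qed.

Lemma mmulv_dist (A B : 'M[R]_p) (y z : 'cV[R]_p) M Yb e d :
  (forall i j, 0 <= A i j <= M) -> (forall j, 0 <= z j 0 <= Yb) ->
  (forall i j, `|A i j - B i j| <= e) -> (forall j, `|y j 0 - z j 0| <= d) ->
  0 <= M -> 0 <= Yb -> 0 <= e -> 0 <= d ->
  forall i, `|mmulv A y i 0 - mmulv B z i 0| <= M * d + Yb * e.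
Proof.
move=> A_bnd z_bnd AB_e yz_d M_ge0 Yb_ge0 e_ge0 d_ge0 i; rewrite !mxE.
apply: bigmax_dist => [|j]; first by rewrite addr_ge0 ?mulr_ge0.
have -> : A i j * y j 0 - B i j * z j 0 =
          A i j * (y j 0 - z j 0) + (A i j - B i j) * z j 0 by ring.
apply: le_trans (ler_normD _ _) _; apply: lerD; rewrite normrM.
  by case/andP: (A_bnd i j) => ? ?; rewrite ger0_norm // ler_pM.
by case/andP: (z_bnd j) => ? ?; rewrite mulrC ger0_norm // ler_pM.
Qed.

Lemma orbit0 a : orbit a 0 = x.
Proof.
rewrite /orbit -[in mmulv _ x](mtmx_of x_ge0).
change (mpow _ 0) with (mpow (mtmx (1 : 'M[maxtimes R]_p)) 0).
by rewrite mpow_mtmx mmulv_mtmx mul1mx mtmx_of.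
Qed.

Lemma orbitS a N : (forall t, (t < p)%N -> 0 <= a t) ->
  orbit a N.+1 = mmulv (Circ p a) (orbit a N).
Proof.
by move=> a_ge0; rewrite !orbit_mtmx // (Circ_mtmx a_ge0) mmulv_mtmx exprS mulmx_ringM.
Qed.

Section Perturbation.
Variables (a b : nat -> R) (M Xb e : R).
Hypothesis a_bnd : forall t, (t < p)%N -> 0 <= a t <= M.
Hypothesis b_bnd : forall t, (t < p)%N -> 0 <= b t <= M.
Hypothesis M_ge1 : 1 <= M.
Hypothesis e_ge0 : 0 <= e.
Hypothesis ab_e : forall t, (t < p)%N -> `|a t - b t| <= e.
Hypothesis x_le : forall i, x i 0 <= Xb.

Let Xb_ge0 : 0 <= Xb. Proof. exact: le_trans (x_ge0 ord0) (x_le ord0). Qed.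
Let M_ge0 : 0 <= M. Proof. by apply: le_trans M_ge1. Qed.

Lemma orbit_bound_dist N i :
  0 <= orbit b N i 0 <= M ^+ N * Xb /\
  `|orbit a N i 0 - orbit b N i 0| <= N%:R * M ^+ N * Xb * e.
Proof.
have a_ge0 t : (t < p)%N -> 0 <= a t by move/a_bnd/andP=> [].
have b_ge0 t : (t < p)%N -> 0 <= b t by move/b_bnd/andP=> [].
elim: N i => [|N IH] i.
  by rewrite !orbit0 expr0 mul1r subrr normr0 !mul0r x_ge0 x_le.
have orbit_bnd j : 0 <= orbit b N j 0 <= M ^+ N * Xb by case: (IH j).
have MNXb_ge0 : 0 <= M ^+ N * Xb by rewrite mulr_ge0 ?exprn_ge0.
rewrite !orbitS //; split.
  rewrite exprS -mulrA; apply: mmulv_bound => // i' j.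
  by rewrite CircE; apply: b_bnd.
apply: le_trans
  (mmulv_dist (M := M) (e := e) _ orbit_bnd _ (fun j => proj2 (IH j)) _ _ _ _ i) _ => //.
- by move=> i' j; rewrite CircE; apply: a_bnd.
- by move=> i' j; rewrite !CircE; apply: ab_e.
- by rewrite !mulr_ge0 ?ler0n ?exprn_ge0.
pose K := M ^+ N * Xb * e.
have K_le : K <= M * K by rewrite ler_peMl // mulr_ge0.
have -> : N.+1%:R * M ^+ N.+1 * Xb * e = M * N%:R * K + M * K.
  by rewrite /K exprS mulrS; ring.
have -> : M * (N%:R * M ^+ N * Xb * e) + M ^+ N * Xb * e = M * N%:R * K + K.
  by rewrite /K; ring.
by rewrite lerD2l.
Qed.

Lemma eigen_defect_dist N i :
  `|(orbit a N.+1 i 0 - \big[Num.max/0]_(t < p) a t * orbit a N i 0) -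
    (orbit b N.+1 i 0 - \big[Num.max/0]_(t < p) b t * orbit b N i 0)|
  <= 2 * N.+1%:R * M ^+ N.+1 * Xb * e.
Proof.
set ma := \big[Num.max/0]_(t < p) a t; set mb := \big[Num.max/0]_(t < p) b t.
have ma_bnd : 0 <= ma <= M.
  rewrite bigmax_ge_id; apply: bigmax_le => // t _.
  by case/andP: (a_bnd (ltn_ord t)).
have mab_e : `|ma - mb| <= e by apply: bigmax_dist => // t; apply: ab_e.
have [_ dist1] := orbit_bound_dist N.+1 i.
have [/andP[ob_ge0 ob_le] dist0] := orbit_bound_dist N i.
set oa1 := orbit a N.+1 i 0 in dist1 *; set ob1 := orbit b N.+1 i 0 in dist1 *.
set oa0 := orbit a N i 0 in dist0 *; set ob0 := orbit b N i 0 in ob_ge0 ob_le dist0 *.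
have -> : oa1 - ma * oa0 - (ob1 - mb * ob0) =
          (oa1 - ob1) - (ma * (oa0 - ob0) + (ma - mb) * ob0) by ring.
have MN_le : M ^+ N <= M ^+ N.+1 by rewrite exprS ler_peMl ?exprn_ge0.
have MNXb_ge0 : 0 <= M ^+ N * Xb by rewrite mulr_ge0 ?exprn_ge0.
have T1 : `|ma * (oa0 - ob0)| <= M * (N%:R * M ^+ N * Xb * e).
  case/andP: ma_bnd => ma_ge0 ma_le.
  by rewrite normrM ger0_norm //; apply: ler_pM.
have T2 : `|(ma - mb) * ob0| <= e * (M ^+ N * Xb).
  by rewrite normrM (ger0_norm ob_ge0) ler_pM.
apply: le_trans (ler_normB _ _) _; apply: le_trans (lerD (lexx _) (ler_normD _ _)) _.
have e1 : 2 * N.+1%:R * M ^+ N.+1 * Xb * e =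
  N.+1%:R * M ^+ N.+1 * Xb * e + M * (N%:R * M ^+ N * Xb * e) + M ^+ N.+1 * Xb * e.
  by rewrite exprS mulrS; ring.
rewrite e1; have : e * (M ^+ N * Xb) <= M ^+ N.+1 * Xb * e.
  by rewrite mulrC ler_wpM2r // ler_wpM2r.
lra.
Qed.

End Perturbation.

Lemma orbit_eigen_step_closed (v m : nat -> R) N :
  (forall t, (t < p)%N -> 0 <= v t) -> (forall t, (t < p)%N -> 0 <= m t) ->
  (forall e, 0 < e -> e <= 1 ->
     orbit_eigen_step (fun t => (1 - e) * v t + e * m t) N) ->
  orbit_eigen_step v N.
Proof.
move=> v_ge0 m_ge0 step_e; apply/matrixP => i j; rewrite (ord1 j) [in RHS]mxE.
pose D := \sum_(t < p) (v t + m t).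
have vm_le t : (t < p)%N -> v t + m t <= D.
  move=> lt_tp; rewrite /D (bigD1 (Ordinal lt_tp)) //= lerDl.
  by apply: sumr_ge0 => u _; rewrite addr_ge0 ?v_ge0 ?m_ge0.
have D_ge0 : 0 <= D by apply: le_trans (vm_le 0%N isT); rewrite addr_ge0 ?v_ge0 ?m_ge0.
pose M := 1 + D; pose Xb := \sum_(u < p) x u 0.
have x_le u : x u 0 <= Xb by rewrite /Xb (bigD1 u) //= lerDl sumr_ge0.
have Xb_ge0 : 0 <= Xb by apply: le_trans (x_le ord0).
have M_ge1 : 1 <= M by rewrite /M lerDl.
apply/eqP; rewrite -subr_eq0; apply/eqP.
apply: (@eq0_of_small _ _ (2 * N.+1%:R * M ^+ N.+1 * Xb * D)).
  by rewrite !mulr_ge0 ?exprn_ge0 // (le_trans ler01).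
move=> e e_gt0 e_le1; pose w t := (1 - e) * v t + e * m t.
have v_bnd t : (t < p)%N -> 0 <= v t <= M.
  move=> lt_tp; rewrite v_ge0 //=.
  by have := vm_le t lt_tp; have := m_ge0 t lt_tp; rewrite /M; lra.
have w_bnd t : (t < p)%N -> 0 <= w t <= M.
  move=> lt_tp; have := vm_le t lt_tp; have := m_ge0 t lt_tp; have := v_ge0 t lt_tp.
  rewrite /w /M; nra.
have vw_e t : (t < p)%N -> `|v t - w t| <= e * D.
  move=> lt_tp; have -> : v t - w t = e * (v t - m t) by rewrite /w; ring.
  rewrite normrM gtr0_norm //; apply: ler_wpM2l; first exact: ltW.
  rewrite ler_norml.
  by have := vm_le t lt_tp; have := m_ge0 t lt_tp; have := v_ge0 t lt_tp; lra.
have := eigen_defect_dist v_bnd w_bnd M_ge1 (mulr_ge0 (ltW e_gt0) D_ge0) vw_e x_le N i.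
have /matrixP/(_ i 0) := step_e e e_gt0 e_le1; rewrite [in RHS]mxE -/w => ->.
by rewrite subrr subr0; congr (_ <= _); ring.
Qed.

End CirculantAttraction.

Section Intervals.
Variable R : rcfType.
Implicit Types (lo hi a : R) (lc rc : bool).

Lemma in_intv_bounds lo hi lc rc a : in_intv lo hi lc rc a -> lo <= a <= hi.
Proof.
by case/andP; case: lc => [lo_a|/ltW lo_a]; case: rc => [a_hi|/ltW a_hi]; rewrite lo_a.
Qed.

Lemma in_intv_lo_ge0 lo hi lc rc : (exists a, in_intv lo hi lc rc a) ->
  (forall a, in_intv lo hi lc rc a -> 0 <= a) -> 0 <= lo.
Proof.
move=> [a a_in] all_ge0; have /andP[lo_a a_hi] := in_intv_bounds a_in.
case: lc a_in all_ge0 => a_in all_ge0.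
  apply: all_ge0; rewrite /in_intv lexx /=.
  by case: rc a_in => /andP[_ a_hi']; [apply: le_trans a_hi' | apply: le_lt_trans a_hi'].
rewrite leNgt; apply/negP => lo_lt0.
(* Otherwise the midpoint of [lo] and [min 0 a] is a negative element of the interval. *)
pose b := (lo + Num.min 0 a) / 2.
move: a_in; rewrite /in_intv /= => /andP[lo_lt_a a_hi'].
have lo_lt_min : lo < Num.min 0 a by rewrite lt_min lo_lt0.
have min_le0 : Num.min 0 a <= 0 by rewrite ge_min lexx.
have min_le_a : Num.min 0 a <= a by rewrite ge_min lexx orbT.
have b_in : in_intv lo hi false rc b.
  rewrite /in_intv /b; apply/andP; split; first lra.
  by case: rc a_hi' {all_ge0} => a_hi'; lra.
by have := all_ge0 b b_in; rewrite /b; lra.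
Qed.

Lemma in_intv_mix lo hi lc rc m e : in_intv lo hi lc rc m -> 0 < e -> e <= 1 ->
  in_intv lo hi lc rc ((1 - e) * lo + e * m) /\ in_intv lo hi lc rc ((1 - e) * hi + e * m).
Proof.
move=> m_in e_gt0 e_le1; have /andP[lo_m m_hi] := in_intv_bounds m_in.
move: m_in; rewrite /in_intv => /andP[lo_m' m_hi'].
have P1 : 0 <= e * (m - lo) by apply: mulr_ge0; lra.
have P2 : 0 <= (1 - e) * (m - lo) by apply: mulr_ge0; lra.
have P3 : 0 <= e * (hi - m) by apply: mulr_ge0; lra.
have P4 : 0 <= (1 - e) * (hi - m) by apply: mulr_ge0; lra.
split; apply/andP; split.
- case: lc lo_m' => lo_m'; first lra.
  have : 0 < e * (m - lo) by apply: mulr_gt0; lra.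
  lra.
- by case: rc m_hi' => m_hi'; lra.
- by case: lc lo_m' => lo_m'; lra.
- case: rc m_hi' => m_hi'; first lra.
  have : 0 < e * (hi - m) by apply: mulr_gt0; lra.
  lra.
Qed.

End Intervals.

Section IntervalCirculants.
Variables (R : rcfType) (n : nat) (lo hi : nat -> R) (lc rc : nat -> bool).
Variable x : 'cV[R]_n.+1.
Hypothesis x_ge0 : forall i, 0 <= x i 0.
Local Notation p := n.+1.
Local Notation in_IC a :=
  (forall t, (t < p)%N -> in_intv (lo t) (hi t) (lc t) (rc t) (a t)).
Hypothesis intv_ne : forall t, (t < p)%N -> exists a, in_intv (lo t) (hi t) (lc t) (rc t) a.
Hypothesis intv_ge0 :
  forall t, (t < p)%N -> forall a, in_intv (lo t) (hi t) (lc t) (rc t) a -> 0 <= a.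

Let lo_ge0 t : (t < p)%N -> 0 <= lo t.
Proof. by move=> lt_tp; apply: in_intv_lo_ge0 (intv_ne lt_tp) (intv_ge0 lt_tp). Qed.

Let lo_le_hi t : (t < p)%N -> lo t <= hi t.
Proof.
move=> lt_tp; have [a /in_intv_bounds/andP[lo_a a_hi]] := intv_ne lt_tp.
exact: le_trans a_hi.
Qed.

Let Ak_ge0 k t : (t < p)%N -> 0 <= (if t == k then hi t else lo t).
Proof.
by move=> lt_tp; case: eqP => _; [apply: le_trans (lo_le_hi lt_tp) |]; apply: lo_ge0.
Qed.

Lemma Attr_Ak_of_IC : (forall a, in_IC a -> Attr (Circ p a) x) ->
  forall k, (k < p)%N -> Attr (Ak p lo hi k) x.
Proof.
move=> attr_IC k _; have [f f_in] := fin_all_exists (fun t : 'I_p => intv_ne (ltn_ord t)).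
pose m t := f (inord t).
have m_in : in_IC m by move=> t lt_tp; have := f_in (inord t); rewrite /m inordK.
rewrite /Ak (Attr_CircP x_ge0 (Ak_ge0 k)).
apply: (orbit_eigen_step_closed x_ge0 (Ak_ge0 k)
  (fun t lt_tp => intv_ge0 lt_tp (m_in t lt_tp))).
move=> e e_gt0 e_le1; set w := fun t => _.
have w_in : in_IC w.
  move=> t lt_tp; have [lo_in hi_in] := in_intv_mix (m_in t lt_tp) e_gt0 e_le1.
  by rewrite /w; case: eqP.
rewrite -(Attr_CircP x_ge0 (fun t lt_tp => intv_ge0 lt_tp (w_in t lt_tp))).
exact: attr_IC.
Qed.

Lemma IC_of_Attr_Ak : (forall k, (k < p)%N -> Attr (Ak p lo hi k) x) ->
  forall a, in_IC a -> Attr (Circ p a) x.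
Proof.
move=> attr_Ak a a_in; pose k : 'I_p := [arg max_(t > ord0) a t]%O.
have a_bnd := arg_max_ord_bound (fun t lt_tp => intv_ge0 lt_tp (a_in t lt_tp)).
have /andP[_ ak_le_hi] := in_intv_bounds (a_in k (ltn_ord k)).
pose v (t : nat) := if t == nat_of_ord k then hi t else lo t.
have v_bnd t : (t < p)%N -> 0 <= v t <= v k.
  move=> lt_tp; rewrite Ak_ge0 //= /v eqxx; case: eqP => [->//|_].
  have /andP[lo_a _] := in_intv_bounds (a_in t lt_tp).
  have /andP[_ at_le] := a_bnd t lt_tp.
  by rewrite (le_trans lo_a) // (le_trans at_le).
have /andP[ak_ge0 _] := a_bnd k (ltn_ord k).
have [/andP[c_ge0 c_le1] c_hi] := ratio_spec (introT andP (conj ak_ge0 ak_le_hi)).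
apply: (Attr_Circ_dominated x_ge0 a_bnd v_bnd c_ge0 _ _ (attr_Ak k (ltn_ord k))).
- move=> t lt_tp; rewrite /v; case: eqP => [->|_]; first by rewrite c_hi.
  have /andP[lo_a _] := in_intv_bounds (a_in t lt_tp).
  by apply: le_trans lo_a; rewrite ler_piMl // lo_ge0.
- by rewrite /v eqxx.
Qed.
End IntervalCirculants.

Theorem corollary4 (R : rcfType) (n : nat) (lo hi : nat -> R) (lc rc : nat -> bool)
  (x : 'cV[R]_n)
  (hx : forall i, 0 <= x i 0)
  (hne : forall t, (t < n)%N -> exists a, in_intv (lo t) (hi t) (lc t) (rc t) a)
  (hpos : forall t, (t < n)%N -> forall a, in_intv (lo t) (hi t) (lc t) (rc t) a -> 0 <= a) :
  (forall a : nat -> R,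
      (forall t, (t < n)%N -> in_intv (lo t) (hi t) (lc t) (rc t) (a t)) ->
      Attr (Circ n a) x)
  <->
  (forall k, (k < n)%N -> Attr (Ak n lo hi k) x).
Proof.
case: n x hx hne hpos => [|n] x hx hne hpos.
  by split=> [_ k //|_ a _]; split=> //; exists 0%N; apply/matrixP => -[].
split; [exact: Attr_Ak_of_IC | exact: IC_of_Attr_Ak].
Qed.
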